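(* Let $E$ be an $\mathbf{a}$-dimensional linear space of $\mathbf{b}\times\mathbf{c}$ complex matrices of bounded rank $r$, with basis $E_1,\dots,E_{\mathbf{a}}$, and let $F\subset \operatorname{End}(\mathbb{C}^k)$ be an $\mathbf{a}$-dimensional linear space of pairwise commuting matrices, with basis $F_1,\dots,F_{\mathbf{a}}$. Let $\tilde E$ be the linear space of $\mathbf{b}k\times\mathbf{c}k$ matrices obtained as follows: for each $i$, replace each entry $e$ of $E_i$ by the $k\times k$ block $eF_i$ (i.e., form the Kronecker product $E_i\otimes F_i$), and let $\tilde E$ be the span of the resulting matrices, $\tilde E=\{\sum_{i} t_i\, E_i\otimes F_i : t_i\in\mathbb{C}\}$. Then every element of $\tilde E$ has rank at most $kr$.
   Context: A linear space of $\mathbf{b}\times\mathbf{c}$ matrices is of bounded rank $r$ if the maximal rank of its elements is $r$ and $r<\min\{\mathbf{b},\mathbf{c}\}$. *)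

From HB Require Import structures.
From mathcomp Require Import all_boot all_order all_algebra.
From mathcomp Require Export complex mxtens.
From mathcomp Require Export Rstruct.
Set Implicit Arguments. Unset Strict Implicit. Unset Printing Implicit Defensive.
Import Order.TTheory GRing.Theory Num.Theory.
Local Open Scope ring_scope.

Notation C := (Rdefinitions.R)[i].

Definition bounded_rank (a b c : nat) (E : 'I_a -> 'M[C]_(b, c)) (r : nat) : Prop :=
  [/\ (forall t : 'I_a -> C, (\rank (\sum_(i < a) t i *: E i)%R <= r)%N),
      (exists t : 'I_a -> C, \rank (\sum_(i < a) t i *: E i)%R = r)
    & (r < minn b c)%N].

From HB Require Import structures.
From mathcomp Require Import all_boot all_order all_algebra.
From mathcomp Require Import complex mxtens.
Set Implicit Arguments. Unset Strict Implicit. Unset Printing Implicit Defensive.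
Import GRing.Theory Num.Theory.
Local Open Scope ring_scope.

(* The F_i lie in a commutative algebra A of k x k matrices containing the
   scalars.  Every (r+1)-minor of sum_i x_i E_i vanishes for all x in C^a; as
   C is infinite, this polynomial identity survives when the x_i are taken in
   A.  If moreover some r x r minor D = G[I,J] of G = sum_i y_i E_i (y_i in A)
   is invertible over A, then G = G[:,J] D^-1 G[I,:] factors through A^r, so
   the bk x ck matrix obtained by expanding every entry of G into its k x k
   block has rank at most kr.  For y_i = v t_i F_i + mu_i, where
   sum_i mu_i E_i has rank r, the expanded matrix is v M + M' with
   M = sum_i t_i E_i (x) F_i; for generic v some r x r minor is invertible and
   rank (v M + M') >= rank M. *)

Section Minors.
Variable K : fieldType.

Lemma mxrank_mxsub m n m' n' (f : 'I_m' -> 'I_m) (g : 'I_n' -> 'I_n)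
    (M : 'M[K]_(m, n)) :
  (\rank (mxsub f g M) <= \rank M)%N.
Proof.
rewrite -{1}[M]mulmx1 mxsub_mul rowsubE -mulmxA.
exact: leq_trans (mxrankM_maxr _ _) (mxrankM_maxl _ _).
Qed.

Lemma det_mxsub_eq0 m n p (f : 'I_p -> 'I_m) (g : 'I_p -> 'I_n)
    (M : 'M[K]_(m, n)) :
  (\rank M < p)%N -> \det (mxsub f g M) = 0.
Proof.
move=> rkM; apply/eqP; apply: contraTT rkM => detM; rewrite -leqNgt.
by rewrite -(mxrank_unit (_ : mxsub f g M \in unitmx)) ?mxrank_mxsub // unitmxE unitfE.
Qed.

Lemma exists_unit_minor m n (M : 'M[K]_(m, n)) :
  exists (f : 'I_(\rank M) -> 'I_m) (g : 'I_(\rank M) -> 'I_n),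
    mxsub f g M \in unitmx.
Proof.
pose X := (rowsub (maxrankfun M) M)^T.
have X_full : row_full X by rewrite /row_full mxrank_tr; exact: maxrowsub_free.
exists (maxrankfun M), (fullrankfun X_full).
rewrite -unitmx_tr; have := fullrowsub_unit X_full.
by congr (_ \in unitmx); apply/matrixP => i j; rewrite !mxE.
Qed.

Lemma mxrank_pencil_generic m n (M0 M1 : 'M[K]_(m, n)) :
  exists2 Q : {poly K}, Q != 0 &
    forall v, ~~ root Q v -> (\rank M0 <= \rank (v *: M0 + M1)%R)%N.
Proof.
have [f [g S_unit]] := exists_unit_minor M0.
set S := mxsub f g M0 in S_unit; set S1 := mxsub f g M1.
pose N := - (invmx S *m S1).
exists ((\det S)%:P * char_poly N).
  by rewrite mulf_neq0 ?polyC_eq0 ?monic_neq0 ?char_poly_monic // -unitfE -unitmxE.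
have sub_pencil v : mxsub f g (v *: M0 + M1) = S *m (v%:M - N).
  rewrite /N opprK mulmxDr mulKVmx // mul_mx_scalar.
  by apply/matrixP => i j; rewrite !mxE.
have char_poly_N v : (char_poly N).[v] = \det (v%:M - N).
  rewrite /char_poly -horner_evalE -det_map_mx; congr (\det _).
  apply/matrixP => i j; rewrite !mxE rmorphB /= rmorphMn /= !horner_evalE.
  by rewrite hornerX hornerC.
move=> v; rewrite /root hornerM hornerC char_poly_N -det_mulmx -sub_pencil.
rewrite -unitfE -unitmxE => unit_sub.
have := mxrank_mxsub f g (v *: M0 + M1); by rewrite (mxrank_unit unit_sub).
Qed.

End Minors.

Section SkeletonDecomposition.
Variable R : comUnitRingType.

Lemma det_block_schur n1 n2 (A : 'M[R]_n1) (B : 'M_(n1, n2)) (C : 'M_(n2, n1))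
    (D : 'M_n2) :
  D \in unitmx -> \det (block_mx A B C D) = \det D * \det (A - B *m invmx D *m C).
Proof.
move=> D_unit.
have -> : block_mx A B C D =
    block_mx 1%:M (B *m invmx D) 0 1%:M *m block_mx (A - B *m invmx D *m C) 0 C D.
  by rewrite mulmx_block !mul1mx !mul0mx !add0r -[B *m _ *m D]mulmxA mulVmx ?mulmx1 ?subrK.
by rewrite det_mulmx det_ublock det_lblock !det1 !mul1r mulrC.
Qed.

Variables (b c r : nat) (G : 'M[R]_(b, c)) (I : 'I_r -> 'I_b) (J : 'I_r -> 'I_c).
Hypothesis minors_eq0 :
  forall (f : 'I_(1 + r) -> 'I_b) (g : 'I_(1 + r) -> 'I_c), \det (mxsub f g G) = 0.
Hypothesis minor_unit : mxsub I J G \in unitmx.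

Lemma skeleton_decomposition :
  G = colsub J G *m invmx (mxsub I J G) *m rowsub I G.
Proof.
apply/matrixP => p q.
pose u := \row_j G p (J j); pose v := \col_i G (I i) q.
pose border m (h : 'I_r -> 'I_m) x (i : 'I_(1 + r)) :=
  if split i is inr l then h l else x.
have bordered : mxsub (border _ I p) (border _ J q) G =
    block_mx (G p q)%:M u v (mxsub I J G).
  apply/matrixP => i j; rewrite !mxE /border.
  by case: (split i) => [i0|l]; rewrite !mxE; case: (split j) => [j0|l']; rewrite !mxE ?ord1.
have det_unit : \det (mxsub I J G) \is a GRing.unit by rewrite -unitmxE.
(* The Schur complement of [mxsub I J G] in the bordered minor is [G p q]
   minus the claimed entry. *)
have := minors_eq0 (border _ I p) (border _ J q).
rewrite bordered det_block_schur // det_mx11 -(mulr0 (\det (mxsub I J G))).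
move=> /(mulrI det_unit)/eqP; rewrite !mxE eqxx mulr1n subr_eq0 => /eqP ->.
apply: eq_bigr => k _; rewrite !mxE; congr (_ * _).
by apply: eq_bigr => l _; rewrite !mxE.
Qed.

End SkeletonDecomposition.

Section BlockMatrices.
Variables (R : pzRingType) (k : nat).

Definition flatmx b c (M : 'M['M[R]_k]_(b, c)) : 'M[R]_(b * k, c * k) :=
  \matrix_(i, j) M (mxtens_unindex i).1 (mxtens_unindex j).1
                   (mxtens_unindex i).2 (mxtens_unindex j).2.

Lemma flatmxE b c (M : 'M['M[R]_k]_(b, c)) p q a a' :
  flatmx M (mxtens_index (p, a)) (mxtens_index (q, a')) = M p q a a'.
Proof. by rewrite mxE !mxtens_indexK. Qed.

Lemma sum_mxtens_index m (f : 'I_(m * k) -> R) :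
  \sum_i f i = \sum_(p < m) \sum_(a < k) f (mxtens_index (p, a)).
Proof.
rewrite (reindex (@mxtens_index m k)) /=; last first.
  by exists (@mxtens_unindex m k) => i _; rewrite (mxtens_indexK, mxtens_unindexK).
by rewrite pair_big; apply: eq_bigr => -[].
Qed.

Lemma flatmxM b c d (M : 'M['M[R]_k]_(b, c)) (N : 'M['M[R]_k]_(c, d)) :
  flatmx (M *m N) = flatmx M *m flatmx N.
Proof.
apply/matrixP => i j; case: (mxtens_indexP i) => p a; case: (mxtens_indexP j) => q a'.
rewrite flatmxE !mxE summxE sum_mxtens_index; apply: eq_bigr => l _.
by rewrite mxE; apply: eq_bigr => a'' _; rewrite !flatmxE.
Qed.

End BlockMatrices.

Lemma exists_nonroot (R : numDomainType) (p : {poly R}) :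
  p != 0 -> exists x, ~~ root p x.
Proof.
move=> p_neq0; pose s := [seq i%:R | i <- iota 0 (size p)] : seq R.
have [all_roots|/allPn [x _ not_root]] := boolP (all (root p) s); last by exists x.
case/eqP: p_neq0; apply: (roots_geq_poly_eq0 all_roots).
  by rewrite map_inj_uniq ?iota_uniq // => i j /eqP; rewrite eqr_nat => /eqP.
by rewrite size_map size_iota.
Qed.

Lemma cent_mx_divring_closed (K : fieldType) m n (R : 'A[K]_(m, n.+1)) :
  divring_closed (fun M : 'M[K]_n.+1 => (M \in 'C(R))%MS).
Proof.
have cent_comm M : (M \in 'C(R))%MS <-> forall B, (B \in R)%MS -> GRing.comm B M.
  split => [/cent_mxP cM B RB|cM]; first by rewrite /GRing.comm -mulmxE cM.
  by apply/cent_mxP => B RB; have := cM B RB; rewrite /GRing.comm -mulmxE.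
split.
- exact: scalar_mx_cent.
- by move=> M N /cent_comm cM /cent_comm cN; apply/cent_comm => B RB; apply: commrB; auto.
- move=> M N /cent_comm cM /cent_comm cN; apply/cent_comm => B RB.
  by apply: commrM; [|apply: commrV]; auto.
Qed.

Section CommutantCenter.
Variables (K : fieldType) (m n : nat) (S : 'A[K]_(m, n.+1)).

(* The centre of the commutant of S: it is commutative for every S, and it
   contains S as soon as S is commutative. *)
Definition zcent_pred : {pred 'M[K]_n.+1} :=
  fun M => (M \in 'C(S))%MS && (M \in 'C('C(S)))%MS.

Lemma zcent_divring_closed : divring_closed zcent_pred.
Proof.
have [CS1 CSB CSD] := cent_mx_divring_closed S.
have [CCS1 CCSB CCSD] := cent_mx_divring_closed 'C(S)%MS.
split; first by apply/andP.
- by move=> M N /andP[? ?] /andP[? ?]; apply/andP; split; [apply: CSB|apply: CCSB].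
- by move=> M N /andP[? ?] /andP[? ?]; apply/andP; split; [apply: CSD|apply: CCSD].
Qed.

HB.instance Definition _ :=
  GRing.isDivringClosed.Build _ zcent_pred zcent_divring_closed.

Record zcent := Zcent { zcent_val : 'M[K]_n.+1; _ : zcent_val \in zcent_pred }.
HB.instance Definition _ := [isSub for zcent_val].
HB.instance Definition _ := [Choice of zcent by <:].
HB.instance Definition _ := [SubChoice_isSubUnitRing of zcent by <:].

Lemma zcent_mulC : commutative (@GRing.mul zcent).
Proof.
move=> [M zM] [N zN]; apply: val_inj => /=.
case/andP: zM => _ /cent_mxP cM; case/andP: zN => cN _.
by rewrite -mulmxE cM.
Qed.

HB.instance Definition _ := GRing.PzRing_hasCommutativeMul.Build zcent zcent_mulC.

Lemma zcent_unitE u : (u \is a GRing.unit) = (zcent_val u \in unitmx).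
Proof. by []. Qed.

Lemma sub_zcent M : (S <= 'C(S))%MS -> (M \in S)%MS -> M \in zcent_pred.
Proof.
move=> S_comm SM; apply/andP; split; first exact: submx_trans S_comm.
by apply/cent_mxP => N /cent_mxP cSN; rewrite cSN.
Qed.

Fact scalar_zcent x : x%:M \in zcent_pred.
Proof. by apply/andP; split; apply: scalar_mx_cent. Qed.

Definition zcent_scalar (x : K) : zcent := Zcent (scalar_zcent x).

Lemma zcent_scalar_is_zmod_morphism : zmod_morphism zcent_scalar.
Proof. by move=> x y; apply: val_inj => /=; rewrite raddfB. Qed.

HB.instance Definition _ := GRing.isZmodMorphism.Build K zcent zcent_scalar
  zcent_scalar_is_zmod_morphism.

Lemma zcent_scalar_is_monoid_morphism : monoid_morphism zcent_scalar.
Proof. by split=> [|x y]; apply: val_inj => //=; rewrite scalar_mxM. Qed.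

HB.instance Definition _ := GRing.isMonoidMorphism.Build K zcent zcent_scalar
  zcent_scalar_is_monoid_morphism.

Definition zcent_polymx (p : {poly zcent}) : 'M[{poly K}]_n.+1 :=
  \matrix_(i, j) \poly_(l < size p) zcent_val p`_l i j.

Lemma zcent_val_horner p x :
  zcent_val p.[zcent_scalar x] = map_mx (horner_eval x) (zcent_polymx p).
Proof.
apply/matrixP => i j; rewrite !mxE horner_evalE horner_poly horner_coef.
rewrite -[zcent_val _]/(val _) rmorph_sum summxE; apply: eq_bigr => l _.
by rewrite -rmorphXn rmorphM /= -mulmxE mul_mx_scalar mxE mulrC.
Qed.

End CommutantCenter.

Section ZcentPolynomials.
Variables (K : numFieldType) (m n : nat) (S : 'A[K]_(m, n.+1)).
Local Notation A := (zcent S).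
Local Notation scal := (@zcent_scalar K m n S).

Lemma zcent_poly_eq0 (p : {poly A}) : (forall x, p.[scal x] = 0) -> p = 0.
Proof.
move=> p_eq0; apply/polyP => l; rewrite coef0.
have entry_eq0 i j : (zcent_polymx p) i j = 0.
  have [//|/exists_nonroot [x /negP[]]] := eqVneq (zcent_polymx p i j) 0.
  have := congr1 (fun M : 'M[K]_n.+1 => M i j) (zcent_val_horner p x).
  by rewrite p_eq0 !mxE horner_evalE /root => <-.
have [lt_l_p|le_p_l] := ltnP l (size p); last by rewrite nth_default.
apply: val_inj; apply/matrixP => i j; have := congr1 (coefp l) (entry_eq0 i j).
by rewrite /= mxE coef_poly lt_l_p mxE coef0.
Qed.

Lemma horner_zcent_unit_generic (p : {poly A}) :
  p`_0 \is a GRing.unit ->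
  exists2 Q : {poly K}, Q != 0 & forall x, ~~ root Q x -> p.[scal x] \is a GRing.unit.
Proof.
have det_eval x : (\det (zcent_polymx p)).[x] = \det (zcent_val p.[scal x]).
  by rewrite -horner_evalE -det_map_mx -zcent_val_horner.
move=> p0_unit; exists (\det (zcent_polymx p)) => [|x]; last first.
  by rewrite /root det_eval -unitfE -unitmxE.
apply: contraTneq p0_unit => Q_eq0.
by rewrite zcent_unitE unitmxE unitfE -horner_coef0 -(rmorph0 scal) -det_eval Q_eq0 horner0 eqxx.
Qed.

Lemma det_zcent_comb_eq0 a p (B : 'I_a -> 'M[K]_p) :
  (forall x : 'I_a -> K, \det (\sum_i x i *: B i) = 0) ->
  forall w : 'I_a -> A, \det (\sum_i w i *: map_mx scal (B i)) = 0.
Proof.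
(* The coordinates are made non-scalar one at a time: the determinant is then
   a polynomial over A in the new coordinate, vanishing at every scalar. *)
move=> detB_eq0.
pose D w := \det (\sum_i w i *: map_mx scal (B i)).
suff D_eq0 (s : seq 'I_a) (x : 'I_a -> K) w :
    (forall i, i \notin s -> w i = scal (x i)) -> D w = 0.
  by move=> w; apply: (D_eq0 (enum 'I_a) (fun=> 0)) => i; rewrite mem_enum.
elim: s x w => [|j s IHs] x w w_scal.
  rewrite /D (eq_bigr (fun i => scal (x i) *: map_mx scal (B i))) => [|i _]; last first.
    by rewrite w_scal.
  under eq_bigr do rewrite -map_mxZ.
  by rewrite -raddf_sum det_map_mx detB_eq0 rmorph0.
pose upd u i := if i == j then u else w i.
pose P := \det (\sum_i (if i == j then 'X else (w i)%:P) *: map_mx (polyC \o scal) (B i)).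
have P_eval u : P.[u] = D (upd u).
  rewrite -horner_evalE -det_map_mx; congr (\det _).
  apply/matrixP => k l; rewrite !mxE !summxE rmorph_sum; apply: eq_bigr => i _.
  by rewrite !mxE rmorphM /= !horner_evalE hornerC /upd; case: eqP; rewrite ?hornerX ?hornerC.
have P_eq0 : P = 0.
  apply: zcent_poly_eq0 => u; rewrite P_eval.
  apply: (IHs (fun i => if i == j then u else x i)) => i; rewrite /upd.
  by case: eqP => // /eqP i_neq_j i_notin_s; rewrite w_scal // in_cons negb_or i_neq_j.
have -> : D w = D (upd (w j)).
  by congr (\det _); apply: eq_bigr => i _; rewrite /upd; case: eqP => // ->.
by rewrite -P_eval P_eq0 horner0.
Qed.

End ZcentPolynomials.

Section TensorRank.
Variables (K : numFieldType) (a b c n r : nat).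
Variables (E : 'I_a -> 'M[K]_(b, c)) (F : 'I_a -> 'M[K]_n.+1).
Hypothesis F_comm : forall i j, F i *m F j = F j *m F i.
Hypothesis E_rank_le : forall x : 'I_a -> K, (\rank (\sum_i x i *: E i)%R <= r)%N.

Let S := \matrix_(i < a) mxvec (F i).

Let F_in_S i : (F i \in S)%MS.
Proof. by have := row_sub i S; rewrite rowK. Qed.

Let S_comm : (S <= 'C(S))%MS.
Proof.
apply/row_subP => i; rewrite rowK; apply/cent_rowP => j.
by rewrite rowK mxvecK /= F_comm.
Qed.

Local Notation A := (zcent S).
Local Notation scal := (zcent_scalar S).

Definition F_zcent i : A := Zcent (sub_zcent S_comm (F_in_S i)).

Definition Ecomb (y : 'I_a -> A) : 'M[A]_(b, c) := \sum_i y i *: map_mx scal (E i).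

Lemma minor_Ecomb_eq0 y p (f : 'I_p -> 'I_b) (g : 'I_p -> 'I_c) :
  (r < p)%N -> \det (mxsub f g (Ecomb y)) = 0.
Proof.
move=> lt_r_p; rewrite linear_sum.
under eq_bigr do rewrite linearZ /= -map_mxsub.
apply: det_zcent_comb_eq0 => x.
under eq_bigr do rewrite -linearZ /=.
rewrite -linear_sum; exact: det_mxsub_eq0 (leq_ltn_trans (E_rank_le x) lt_r_p).
Qed.

Lemma flat_Ecomb y :
  flatmx (map_mx val (Ecomb y)) = \sum_i E i *t zcent_val (y i).
Proof.
apply/matrixP => i j; case: (mxtens_indexP i) => p al; case: (mxtens_indexP j) => q be.
rewrite flatmxE !mxE /Ecomb !summxE rmorph_sum summxE; apply: eq_bigr => k _.
by rewrite tensmxE mxE rmorphM /= -mulmxE [X in _ *m zcent_val X]mxE mul_mx_scalar mxE mulrC.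
Qed.

Lemma mxrank_flat_Ecomb y (I : 'I_r -> 'I_b) (J : 'I_r -> 'I_c) :
  mxsub I J (Ecomb y) \in unitmx ->
  (\rank (\sum_i E i *t zcent_val (y i))%R <= r * n.+1)%N.
Proof.
move=> minor_unit; rewrite -flat_Ecomb.
have minors_eq0 f g := minor_Ecomb_eq0 y f g (ltnSn r).
rewrite (skeleton_decomposition minors_eq0 minor_unit) map_mxM flatmxM.
exact: leq_trans (mxrankM_maxr _ _) (rank_leq_row _).
Qed.

Lemma Ecomb_scalar (x : 'I_a -> K) :
  Ecomb (scal \o x) = map_mx scal (\sum_i x i *: E i).
Proof. by rewrite /Ecomb; under eq_bigr do rewrite -map_mxZ; rewrite -raddf_sum. Qed.

Lemma minor_Ecomb_unit_generic (y1 y0 : 'I_a -> A) (I : 'I_r -> 'I_b) (J : 'I_r -> 'I_c) :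
  mxsub I J (Ecomb y0) \in unitmx ->
  exists2 Q : {poly K}, Q != 0 &
    forall v, ~~ root Q v -> mxsub I J (Ecomb (fun i => scal v * y1 i + y0 i)) \in unitmx.
Proof.
move=> minor0_unit.
have Ecomb_pencil u : Ecomb (fun i => u * y1 i + y0 i) = u *: Ecomb y1 + Ecomb y0.
  by rewrite /Ecomb scaler_sumr -big_split; apply: eq_bigr => i _; rewrite scalerDl scalerA.
pose Delta := \det (mxsub I J ('X *: map_mx polyC (Ecomb y1) + map_mx polyC (Ecomb y0))).
have Delta_eval u : Delta.[u] = \det (mxsub I J (Ecomb (fun i => u * y1 i + y0 i))).
  rewrite Ecomb_pencil -horner_evalE -det_map_mx map_mxsub; congr (\det (mxsub _ _ _)).
  by apply/matrixP => k l; rewrite !mxE /= horner_evalE hornerD hornerM hornerX !hornerC.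
have [|Q Q_neq0 Q_unit] := horner_zcent_unit_generic (p := Delta).
  by rewrite -horner_coef0 Delta_eval Ecomb_pencil scale0r add0r -unitmxE.
by exists Q => [//|v /Q_unit]; rewrite Delta_eval unitmxE.
Qed.

Lemma mxrank_tens_comb_le (t mu : 'I_a -> K) :
  \rank (\sum_i mu i *: E i)%R = r ->
  (\rank (\sum_i t i *: (E i *t F i))%R <= r * n.+1)%N.
Proof.
move=> rank_mu.
have [I [J minor_unit]] : exists (I : 'I_r -> 'I_b) (J : 'I_r -> 'I_c),
    mxsub I J (\sum_i mu i *: E i)%R \in unitmx.
  by rewrite -rank_mu; apply: exists_unit_minor.
have minor_mu_unit : mxsub I J (Ecomb (scal \o mu)) \in unitmx.
  by rewrite Ecomb_scalar -map_mxsub unitmxE det_map_mx rmorph_unit // -unitmxE.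
have [Q1 Q1_neq0 Q1_unit] :=
  minor_Ecomb_unit_generic (fun i => scal (t i) * F_zcent i) minor_mu_unit.
have [Q2 Q2_neq0 Q2_rank] := mxrank_pencil_generic
  (\sum_i t i *: (E i *t F i)) (\sum_i E i *t (mu i)%:M).
have [v] := exists_nonroot (mulf_neq0 Q1_neq0 Q2_neq0).
rewrite rootM negb_or => /andP[/Q1_unit unit_v /Q2_rank rank_le].
apply: leq_trans rank_le _; apply: leq_trans (mxrank_flat_Ecomb unit_v).
apply/eq_leq; congr (\rank _); apply/matrixP => i j.
case: (mxtens_indexP i) => p al; case: (mxtens_indexP j) => q be.
rewrite !mxE !summxE mulr_sumr -big_split; apply: eq_bigr => k _ /=.
by rewrite mxE !tensmxE -!mulmxE !mul_scalar_mx !mxE mulrDr [t k * _]mulrCA [v * _]mulrCA.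
Qed.

End TensorRank.

Theorem mainTheorem2 (a b c k r : nat)
  (E : 'I_a -> 'M[C]_(b, c)) (F : 'I_a -> 'M[C]_k)
  (E_basis : free ([seq E i | i : 'I_a] : seq 'M[C]_(b, c)))
  (E_bounded : bounded_rank E r)
  (F_basis : free ([seq F i | i : 'I_a] : seq 'M[C]_k))
  (F_comm : forall i j : 'I_a, F i *m F j = F j *m F i) :
  forall t : 'I_a -> C, (\rank (\sum_(i < a) t i *: (E i *t F i))%R <= k * r)%N.
Proof.
case: k F F_basis F_comm => [|n] F _ F_comm t.
  by rewrite (leq_trans (rank_leq_row _)) // muln0.
case: E_bounded => E_rank_le [mu rank_mu] _.
by rewrite [(n.+1 * r)%N]mulnC (mxrank_tens_comb_le F_comm E_rank_le t rank_mu).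
Qed.
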